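(* Let $\widehat\psi:\widehat S\to\mathbb Z$ be the homomorphism with $\widehat\psi(y_s)=1$, $\widehat\psi(x_s)=0$ for all $s\in\{0,1\}^{<\mathbb N}$ and $\widehat\psi(p_n)=0$ for all $n\ge0$. Then $S=\ker(\widehat\psi)$.
   Context: Let $\{0,1\}^{\mathbb N}$ be the Cantor set of infinite binary sequences and $\{0,1\}^{<\mathbb N}$ the set of finite binary words, including the empty word; juxtaposition denotes concatenation, $0^n,1^n$ denote constant words. Homeomorphisms act on the right. Define $x,y$ by $00\eta\cdot x=0\eta$, $01\eta\cdot x=10\eta$, $1\eta\cdot x=11\eta$, and recursively $00\eta\cdot y=0(\eta\cdot y)$, $01\eta\cdot y=10(\eta\cdot y^{-1})$, $1\eta\cdot y=11(\eta\cdot y)$; $x_s$ (resp. $y_s$) sends $s\eta\mapsto s(\eta\cdot x)$ (resp. $s(\eta\cdot y)$) and fixes sequences not beginning with $s$. For $n\ge0$ let $p_n$ be the homeomorphism with $1^k0\eta\cdot p_n=1^{k+1}0\eta$ for $0\le k\le n-1$, $1^n0\eta\cdot p_n=1^{n+1}\eta$, and $1^{n+1}\eta\cdot p_n=0\eta$. $F=\langle x_s\rangle$, $T=\langle F, p_n\ (n\ge0)\rangle$ (Thompson's group $T$), $\widehat S=\langle x_s,y_s,p_n\rangle$, and $S=\langle T,\ y_{10}y_{110}^{-1}\rangle$. (That such a homomorphism $\widehat\psi$ exists is part of the paper's results.) *)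

(* Cantor set {0,1}^N as nat -> bool (false = 0, true = 1);
   finite words as list bool. Homeomorphisms act on the right:
   eta . (g h) = (eta . g) . h, i.e. gmul g h = fun eta => h (g eta). *)
From Stdlib Require Import List ZArith Streams Bool.
Import ListNotations.

Definition Cantor := nat -> bool.

Definition ccons (b : bool) (e : Cantor) : Cantor :=
  fun n => match n with 0 => b | S m => e m end.

Definition cdrop (k : nat) (e : Cantor) : Cantor := fun n => e (k + n).

Fixpoint prepend (s : list bool) (e : Cantor) : Cantor :=
  match s with nil => e | b :: s' => ccons b (prepend s' e) end.

Fixpoint has_prefix (s : list bool) (e : Cantor) : bool :=
  match s with
  | nil => true
  | b :: s' => Bool.eqb (e 0) b && has_prefix s' (cdrop 1 e)
  end.

Definition at_word (s : list bool) (f : Cantor -> Cantor) : Cantor -> Cantor :=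
  fun e => if has_prefix s e then prepend s (f (cdrop (length s) e)) else e.

Definition gmul (g h : Cantor -> Cantor) : Cantor -> Cantor := fun e => h (g e).

(* x : 00eta -> 0eta, 01eta -> 10eta, 1eta -> 11eta *)
Definition x_map (e : Cantor) : Cantor :=
  if e 0 then ccons true (ccons true (cdrop 1 e))
  else if e 1 then ccons true (ccons false (cdrop 2 e))
  else ccons false (cdrop 2 e).

CoFixpoint y_str (s : Stream bool) : Stream bool :=
  match s with
  | Cons false (Cons false t) => Cons false (y_str t)
  | Cons false (Cons true t) => Cons true (Cons false (yinv_str t))
  | Cons true t => Cons true (Cons true (y_str t))
  end
with yinv_str (s : Stream bool) : Stream bool :=
  match s with
  | Cons false t => Cons false (Cons false (yinv_str t))
  | Cons true (Cons false t) => Cons false (Cons true (y_str t))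
  | Cons true (Cons true t) => Cons true (yinv_str t)
  end.

CoFixpoint to_stream (e : Cantor) : Stream bool := Cons (e 0) (to_stream (cdrop 1 e)).
Definition of_stream (s : Stream bool) : Cantor := fun n => Str_nth n s.

Definition y_map (e : Cantor) : Cantor := of_stream (y_str (to_stream e)).
Definition yinv_map (e : Cantor) : Cantor := of_stream (yinv_str (to_stream e)).

Definition x_s (s : list bool) : Cantor -> Cantor := at_word s x_map.
Definition y_s (s : list bool) : Cantor -> Cantor := at_word s y_map.
Definition yinv_s (s : list bool) : Cantor -> Cantor := at_word s yinv_map.

Definition p_map (n : nat) (e : Cantor) : Cantor :=
  if has_prefix (repeat true (S n)) e then ccons false (cdrop (S n) e)
  else if has_prefix (repeat true n ++ [false]) e
       then prepend (repeat true (S n)) (cdrop (S n) e)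
       else ccons true e.

Inductive generated (P : (Cantor -> Cantor) -> Prop) : (Cantor -> Cantor) -> Prop :=
| gen_base f : P f -> generated P f
| gen_id : generated P (fun e => e)
| gen_mul f g : generated P f -> generated P g -> generated P (gmul f g)
| gen_inv f g : generated P f -> (forall e, g (f e) = e) -> (forall e, f (g e) = e) ->
                generated P g.

Definition T_gens (f : Cantor -> Cantor) : Prop :=
  (exists s, f = x_s s) \/ (exists n, f = p_map n).

Definition Shat_gens (f : Cantor -> Cantor) : Prop :=
  (exists s, f = x_s s) \/ (exists s, f = y_s s) \/ (exists n, f = p_map n).

Definition S_gens (f : Cantor -> Cantor) : Prop :=
  T_gens f \/ f = gmul (y_s [true; false]) (yinv_s [true; true; false]).

Definition Tgrp := generated T_gens.
Definition Shat := generated Shat_gens.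
Definition Sgrp := generated S_gens.

(* Products are in the right-action order: as maps, f g = fun e => g (f e).
   Write c = y_10.  The inclusion S <= ker psi holds because every generator
   x_s, p_n, y_10 y_110^-1 of S has psi = 0.  Conversely we show Shat = S <c>:
   every f in Shat is f = h c^k with h in S, so psi f = psi h + k = k and
   psi f = 0 forces f = h in S.  This rests on two facts.
   (a) All y_s lie in one right coset of S, i.e. y_a y_b^-1 is in S for all a, b.
       Conjugating y_a y_b^-1 by an element of S carrying cones a', b' onto the
       cones a, b gives y_a' y_b'^-1.  Starting from y_10 y_110^-1, the powers of
       p_2 relate the cones 0, 10, 110, 111, the elements x_1s reach every subcone
       of 1, p_0 swaps the cones 0 and 1, and the relation y = x y_0 y_10^-1 y_11
       (valid in every cone) handles the cone 1 and the whole space.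
   (b) S is normalised by c: each generator g of S either commutes with some y_b
       that also commutes with c, or carries a cone disjoint from 10 onto 10; in
       both cases the conjugates of g by c differ from g by factors y_a y_b^-1.
   The file develops, in order: maps acting in a cone; x, y and their inverses;
   generated groups; the relation "y_a, y_b in the same coset"; normality of S
   under c; the decomposition Shat = S <c>; the kernel computation. *)

From Stdlib Require Import List ZArith Lia FunctionalExtensionality Streams Bool.
Import ListNotations.

Lemma ccons_eta (e : Cantor) : e = ccons (e 0%nat) (cdrop 1 e).
Proof. apply functional_extensionality; intros [|n]; reflexivity. Qed.

Lemma cantor_case (P : Cantor -> Prop) : (forall b z, P (ccons b z)) -> forall e, P e.
Proof. intros H e; rewrite (ccons_eta e); apply H. Qed.

Lemma has_prefix_prepend s z : has_prefix s (prepend s z) = true.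
Proof. induction s as [|b s IH]; [reflexivity|]. simpl. destruct b; exact IH. Qed.

Lemma cdrop_prepend s z : cdrop (length s) (prepend s z) = z.
Proof. induction s as [|b s IH]; [reflexivity|]. exact IH. Qed.

Lemma prepend_cdrop s e : has_prefix s e = true -> prepend s (cdrop (length s) e) = e.
Proof.
  revert e; induction s as [|b s IH]; intros e H; [reflexivity|].
  simpl in H. apply andb_true_iff in H as [Hb Hs].
  simpl. change (cdrop (S (length s)) e) with (cdrop (length s) (cdrop 1 e)).
  rewrite IH by exact Hs.
  apply functional_extensionality; intros [|n]; [|reflexivity].
  simpl. destruct (e 0%nat), b; simpl in Hb; congruence.
Qed.

Lemma at_word_prepend s F z : at_word s F (prepend s z) = prepend s (F z).
Proof. unfold at_word. rewrite has_prefix_prepend, cdrop_prepend. reflexivity. Qed.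

Lemma at_word_cons b s F w : at_word (b :: s) F (ccons b w) = ccons b (at_word s F w).
Proof.
  unfold at_word. cbn [has_prefix].
  change (cdrop 1 (ccons b w)) with w.
  replace (Bool.eqb (ccons b w 0%nat) b) with true by (destruct b; reflexivity).
  simpl. destruct (has_prefix s w); reflexivity.
Qed.

Lemma at_word_cons_neq b c s F w : b <> c -> at_word (b :: s) F (ccons c w) = ccons c w.
Proof.
  intros Hbc. unfold at_word. cbn [has_prefix].
  replace (Bool.eqb (ccons c w 0%nat) b) with false by (destruct b, c; simpl; congruence).
  reflexivity.
Qed.

Lemma at_word_app s t F e : at_word s (at_word t F) e = at_word (s ++ t) F e.
Proof.
  revert e; induction s as [|b s IH]; [reflexivity|].
  apply cantor_case; intros c w.
  destruct (Bool.bool_dec b c) as [<-|Hbc].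
  - simpl app. rewrite !at_word_cons, IH. reflexivity.
  - simpl app. rewrite !at_word_cons_neq by exact Hbc. reflexivity.
Qed.

Lemma at_word_compose s F G e : at_word s (fun z => G (F z)) e = at_word s G (at_word s F e).
Proof.
  unfold at_word at 1 3. destruct (has_prefix s e) eqn:E.
  - rewrite at_word_prepend. reflexivity.
  - unfold at_word. rewrite E. reflexivity.
Qed.

Lemma at_word_inv s F G : (forall z, F (G z) = z) -> forall e, at_word s F (at_word s G e) = e.
Proof.
  intros H e. rewrite <- at_word_compose.
  unfold at_word. destruct (has_prefix s e) eqn:E; [|reflexivity].
  rewrite H. apply prepend_cdrop; exact E.
Qed.

Lemma at_word_disjoint_comm p a b F G e :
  at_word (p ++ false :: a) F (at_word (p ++ true :: b) G e)
  = at_word (p ++ true :: b) G (at_word (p ++ false :: a) F e).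
Proof.
  revert e; induction p as [|c p IH]; apply cantor_case; intros d z; simpl app.
  - destruct d.
    + rewrite at_word_cons, !(at_word_cons_neq false true) by discriminate.
      rewrite at_word_cons. reflexivity.
    + rewrite (at_word_cons_neq true false) by discriminate. rewrite at_word_cons.
      rewrite (at_word_cons_neq true false) by discriminate. reflexivity.
  - destruct (Bool.bool_dec d c) as [->|Hdc].
    + rewrite !at_word_cons, IH. reflexivity.
    + rewrite !at_word_cons_neq by congruence. reflexivity.
Qed.

Lemma at_word_conj g ginv a a' :
  (forall e, ginv (g e) = e) -> (forall z, g (prepend a' z) = prepend a z) ->
  forall F e, at_word a F (g e) = g (at_word a' F e).
Proof.
  intros Hinv Hmap F e. unfold at_word at 2. destruct (has_prefix a' e) eqn:E.
  - rewrite <- (prepend_cdrop a' e E) at 1. rewrite !Hmap. apply at_word_prepend.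
  - unfold at_word. destruct (has_prefix a (g e)) eqn:E2; [|reflexivity].
    exfalso. apply prepend_cdrop in E2.
    assert (Ee : e = prepend a' (cdrop (length a) (g e))).
    { rewrite <- (Hinv e), <- E2 at 1. rewrite <- Hmap, Hinv. reflexivity. }
    rewrite Ee, has_prefix_prepend in E. discriminate.
Qed.

(* One-step unfoldings of the corecursive definitions of y and y^-1;
   [stream_frob] forces the reduction of a cofixpoint. *)
Definition stream_frob (s : Stream bool) : Stream bool := match s with Cons a t => Cons a t end.
Lemma stream_frob_eq s : s = stream_frob s. Proof. destruct s; reflexivity. Qed.

Lemma to_stream_ccons b e : to_stream (ccons b e) = Cons b (to_stream e).
Proof. rewrite (stream_frob_eq (to_stream (ccons b e))). reflexivity. Qed.

Lemma of_stream_cons b s : of_stream (Cons b s) = ccons b (of_stream s).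
Proof. apply functional_extensionality; intros [|n]; reflexivity. Qed.

Ltac unfold_y_str := unfold y_map, yinv_map; rewrite !to_stream_ccons;
  match goal with |- of_stream ?t = _ => rewrite (stream_frob_eq t) end;
  cbn [stream_frob y_str yinv_str]; rewrite !of_stream_cons; reflexivity.

Lemma y_map_00 z : y_map (ccons false (ccons false z)) = ccons false (y_map z).
Proof. unfold_y_str. Qed.
Lemma y_map_01 z : y_map (ccons false (ccons true z)) = ccons true (ccons false (yinv_map z)).
Proof. unfold_y_str. Qed.
Lemma y_map_1 z : y_map (ccons true z) = ccons true (ccons true (y_map z)).
Proof. unfold_y_str. Qed.
Lemma yinv_map_0 z : yinv_map (ccons false z) = ccons false (ccons false (yinv_map z)).
Proof. unfold_y_str. Qed.
Lemma yinv_map_10 z : yinv_map (ccons true (ccons false z)) = ccons false (ccons true (y_map z)).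
Proof. unfold_y_str. Qed.
Lemma yinv_map_11 z : yinv_map (ccons true (ccons true z)) = ccons true (yinv_map z).
Proof. unfold_y_str. Qed.

(* y and y^-1 are mutually inverse: by induction on n, both composites fix the
   n-th letter of every sequence (each unfolding step fixes at least one letter). *)
Lemma y_yinv_letters N : forall n, (n < N)%nat -> forall e,
  yinv_map (y_map e) n = e n /\ y_map (yinv_map e) n = e n.
Proof.
  induction N as [|N IH]; intros n Hn e; [lia|].
  split.
  - revert e; apply cantor_case; intros [] z.
    + rewrite y_map_1, yinv_map_11.
      destruct n as [|n]; [reflexivity|]. simpl. apply IH; lia.
    + revert z; apply cantor_case; intros [] w.
      * rewrite y_map_01, yinv_map_10. destruct n as [|[|n]]; try reflexivity.
        simpl. apply IH; lia.
      * rewrite y_map_00, yinv_map_0. destruct n as [|[|n]]; try reflexivity.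
        simpl. apply IH; lia.
  - revert e; apply cantor_case; intros [] z.
    + revert z; apply cantor_case; intros [] w.
      * rewrite yinv_map_11, y_map_1. destruct n as [|[|n]]; try reflexivity.
        simpl. apply IH; lia.
      * rewrite yinv_map_10, y_map_01. destruct n as [|[|n]]; try reflexivity.
        simpl. apply IH; lia.
    + rewrite yinv_map_0, y_map_00. destruct n as [|n]; [reflexivity|].
      simpl. apply IH; lia.
Qed.

Lemma yinv_y e : yinv_map (y_map e) = e.
Proof. apply functional_extensionality; intros n. apply (y_yinv_letters (S n)); lia. Qed.
Lemma y_yinv e : y_map (yinv_map e) = e.
Proof. apply functional_extensionality; intros n. apply (y_yinv_letters (S n)); lia. Qed.

(* The inverse of x : 0eta -> 00eta, 10eta -> 01eta, 11eta -> 1eta. *)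
Definition xinv_map (e : Cantor) : Cantor :=
  if e 0%nat then (if e 1%nat then ccons true (cdrop 2 e) else ccons false (ccons true (cdrop 2 e)))
  else ccons false (ccons false (cdrop 1 e)).
Definition xinv_s (s : list bool) : Cantor -> Cantor := at_word s xinv_map.

Lemma x_xinv e : x_map (xinv_map e) = e.
Proof.
  revert e; apply cantor_case; intros [] z; [revert z; apply cantor_case; intros [] w|]; reflexivity.
Qed.
Lemma xinv_x e : xinv_map (x_map e) = e.
Proof.
  revert e; apply cantor_case; intros [] z; [|revert z; apply cantor_case; intros [] w]; reflexivity.
Qed.

Lemma x_s_xinv_s s e : x_s s (xinv_s s e) = e.
Proof. apply at_word_inv, x_xinv. Qed.
Lemma xinv_s_x_s s e : xinv_s s (x_s s e) = e.
Proof. apply at_word_inv, xinv_x. Qed.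
Lemma y_s_yinv_s s e : y_s s (yinv_s s e) = e.
Proof. apply at_word_inv, y_yinv. Qed.
Lemma yinv_s_y_s s e : yinv_s s (y_s s e) = e.
Proof. apply at_word_inv, yinv_y. Qed.

(* The relation y = x y_0 y_10^-1 y_11 (product in the right-action order),
   checked on the three cones 1, 01, 00 on which x and y are defined. *)
Lemma y_root_relation e :
  y_map e = y_s [true; true] (yinv_s [true; false] (y_s [false] (x_map e))).
Proof.
  revert e; apply cantor_case; intros [] z.
  - rewrite y_map_1. change (x_map (ccons true z)) with (ccons true (ccons true z)).
    unfold y_s, yinv_s.
    rewrite (at_word_cons_neq false true) by discriminate.
    rewrite !at_word_cons, (at_word_cons_neq false true) by discriminate. reflexivity.
  - revert z; apply cantor_case; intros [] w.
    + rewrite y_map_01. change (x_map (ccons false (ccons true w))) with (ccons true (ccons false w)).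
      unfold y_s, yinv_s.
      rewrite (at_word_cons_neq false true) by discriminate.
      rewrite !at_word_cons, (at_word_cons_neq true false) by discriminate. reflexivity.
    + rewrite y_map_00. change (x_map (ccons false (ccons false w))) with (ccons false w).
      unfold y_s, yinv_s.
      rewrite at_word_cons, !(at_word_cons_neq true false) by discriminate. reflexivity.
Qed.

Lemma y_relation s e :
  y_s s e = y_s (s ++ [true; true]) (yinv_s (s ++ [true; false]) (y_s (s ++ [false]) (x_s s e))).
Proof.
  transitivity (at_word s (fun z => y_s [true; true] (yinv_s [true; false] (y_s [false] (x_map z)))) e).
  { unfold y_s at 1, at_word. destruct (has_prefix s e); [f_equal; apply y_root_relation|reflexivity]. }
  rewrite (at_word_compose s (fun z => yinv_s [true; false] (y_s [false] (x_map z))) (y_s [true; true])).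
  rewrite (at_word_compose s (fun z => y_s [false] (x_map z)) (yinv_s [true; false])).
  rewrite (at_word_compose s x_map (y_s [false])).
  unfold y_s, yinv_s, x_s. rewrite !at_word_app. reflexivity.
Qed.

Section GeneratedGroups.
Variable P : (Cantor -> Cantor) -> Prop.

Lemma generated_ext f g : generated P f -> (forall e, f e = g e) -> generated P g.
Proof. intros Hf E. replace g with f; [exact Hf|]. apply functional_extensionality; exact E. Qed.

Lemma generated_comp f g : generated P f -> generated P g -> generated P (fun e => g (f e)).
Proof. intros; apply (gen_mul _ f g); assumption. Qed.

Lemma generated_mono (Q : (Cantor -> Cantor) -> Prop) :
  (forall f, P f -> generated Q f) -> forall f, generated P f -> generated Q f.
Proof.
  intros HPQ f Hf; induction Hf as [f Hf| |f g _ IHf _ IHg|f g _ IHf Hgf Hfg].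
  - exact (HPQ f Hf).
  - apply gen_id.
  - apply gen_mul; assumption.
  - apply (gen_inv _ f); assumption.
Qed.
End GeneratedGroups.

Lemma Sgrp_x s : Sgrp (x_s s).
Proof. apply gen_base. left. left. exists s. reflexivity. Qed.
Lemma Sgrp_xinv s : Sgrp (xinv_s s).
Proof. eapply gen_inv; [apply Sgrp_x|apply xinv_s_x_s|apply x_s_xinv_s]. Qed.
Lemma Sgrp_p n : Sgrp (p_map n).
Proof. apply gen_base. left. right. exists n. reflexivity. Qed.

Definition ydiff (a b : list bool) : Cantor -> Cantor := gmul (y_s a) (yinv_s b).

(* y_a and y_b lie in the same right coset of S. *)
Definition ycoset_eq (a b : list bool) : Prop := Sgrp (ydiff a b).

Lemma ycoset_eq_10_110 : ycoset_eq [true; false] [true; true; false].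
Proof. apply gen_base. right. reflexivity. Qed.

Lemma ycoset_eq_refl a : ycoset_eq a a.
Proof.
  apply (generated_ext _ (fun e => e)); [apply gen_id|].
  intros e; unfold ydiff, gmul. symmetry; apply yinv_s_y_s.
Qed.

Lemma ycoset_eq_sym a b : ycoset_eq a b -> ycoset_eq b a.
Proof.
  intros H. eapply gen_inv; [exact H| |]; intros e; unfold ydiff, gmul;
    rewrite y_s_yinv_s; apply yinv_s_y_s.
Qed.

Lemma ycoset_eq_trans a b c : ycoset_eq a b -> ycoset_eq b c -> ycoset_eq a c.
Proof.
  intros Hab Hbc. apply (generated_ext _ (gmul (ydiff a b) (ydiff b c))); [apply gen_mul; assumption|].
  intros e; unfold ydiff, gmul. rewrite y_s_yinv_s. reflexivity.
Qed.

Lemma ycoset_eq_transport g ginv a b a' b' :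
  Sgrp g -> (forall e, ginv (g e) = e) -> (forall e, g (ginv e) = e) ->
  (forall z, g (prepend a' z) = prepend a z) ->
  (forall z, g (prepend b' z) = prepend b z) ->
  ycoset_eq a b -> ycoset_eq a' b'.
Proof.
  intros Sg Hgi Hig Ha Hb Hab.
  assert (Sginv : Sgrp ginv) by (apply (gen_inv _ g); assumption).
  apply (generated_ext _ (fun e => ginv (ydiff a b (g e)))).
  - apply generated_comp; [apply generated_comp|]; assumption.
  - intros e. unfold ydiff, gmul, y_s, yinv_s.
    rewrite (at_word_conj g ginv a a' Hgi Ha), (at_word_conj g ginv b b' Hgi Hb), Hgi.
    reflexivity.
Qed.

(* p_2 cyclically permutes the cones 0 -> 10 -> 110 -> 111 -> 0. *)
Lemma p2_order4 e : p_map 2 (p_map 2 (p_map 2 (p_map 2 e))) = e.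
Proof.
  revert e; apply cantor_case; intros [] z; [|reflexivity].
  revert z; apply cantor_case; intros [] w; [|reflexivity].
  revert w; apply cantor_case; intros [] v; reflexivity.
Qed.

Lemma Sgrp_p2_square : Sgrp (fun e => p_map 2 (p_map 2 e)).
Proof. apply generated_comp; apply Sgrp_p. Qed.

Lemma Sgrp_p2_cube : Sgrp (fun e => p_map 2 (p_map 2 (p_map 2 e))).
Proof. apply generated_comp; [apply Sgrp_p2_square|apply Sgrp_p]. Qed.

(* Conjugating y_10 y_110^-1 by powers of p_2 relates the four cones 0, 10, 110, 111. *)
Lemma ycoset_eq_0_10 : ycoset_eq [false] [true; false].
Proof.
  apply (ycoset_eq_transport (p_map 2) (fun e => p_map 2 (p_map 2 (p_map 2 e)))
           [true; false] [true; true; false]);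
    try (intros; reflexivity); [apply Sgrp_p|apply p2_order4|apply p2_order4|apply ycoset_eq_10_110].
Qed.

Lemma ycoset_eq_110_111 : ycoset_eq [true; true; false] [true; true; true].
Proof.
  apply (ycoset_eq_transport (fun e => p_map 2 (p_map 2 (p_map 2 e))) (p_map 2)
           [true; false] [true; true; false]);
    try (intros; reflexivity); [apply Sgrp_p2_cube|apply p2_order4|apply p2_order4|apply ycoset_eq_10_110].
Qed.

Lemma ycoset_eq_111_0 : ycoset_eq [true; true; true] [false].
Proof.
  apply (ycoset_eq_transport (fun e => p_map 2 (p_map 2 e)) (fun e => p_map 2 (p_map 2 e))
           [true; false] [true; true; false]);
    try (intros; reflexivity); [apply Sgrp_p2_square|apply p2_order4|apply p2_order4|apply ycoset_eq_10_110].
Qed.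

(* An element of S supported in the cone 1s0 fixes the cone 0, so it moves
   the relation "y_a ~ y_0" along its action on cones. *)
Lemma ycoset_eq_move_in_cone1 s0 F G a a' :
  Sgrp (at_word (true :: s0) F) -> (forall z, G (F z) = z) -> (forall z, F (G z) = z) ->
  (forall z, at_word (true :: s0) F (prepend a' z) = prepend a z) ->
  ycoset_eq a [false] -> ycoset_eq a' [false].
Proof.
  intros SF HGF HFG Hmap.
  apply (ycoset_eq_transport (at_word (true :: s0) F) (at_word (true :: s0) G)); try assumption.
  - apply at_word_inv, HGF.
  - apply at_word_inv, HFG.
  - intros z. apply at_word_cons_neq. discriminate.
Qed.

Lemma ycoset_eq_x_move s0 a a' :
  (forall z, x_s (true :: s0) (prepend a' z) = prepend a z) ->
  ycoset_eq a [false] -> ycoset_eq a' [false].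
Proof. apply (ycoset_eq_move_in_cone1 s0 x_map xinv_map); [apply Sgrp_x|apply xinv_x|apply x_xinv]. Qed.

Lemma ycoset_eq_xinv_move s0 a a' :
  (forall z, xinv_s (true :: s0) (prepend a' z) = prepend a z) ->
  ycoset_eq a [false] -> ycoset_eq a' [false].
Proof. apply (ycoset_eq_move_in_cone1 s0 xinv_map x_map); [apply Sgrp_xinv|apply x_xinv|apply xinv_x]. Qed.

(* Every proper subcone 1u of the cone 1 satisfies y_1u ~ y_0, by induction on
   the length of u, using the moves x_1, x_1^-1 and x_11, which fix the cone 0. *)
Lemma ycoset_eq_cone1_bounded n : forall u, length u <= n -> u <> [] -> ycoset_eq (true :: u) [false].
Proof.
  induction n as [|n IH]; intros u Hl Hne.
  { destruct u; [congruence|simpl in Hl; lia]. }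
  assert (Hshort : forall w, length w < length u -> w <> [] -> ycoset_eq (true :: w) [false]).
  { intros w Hw Hw0. apply IH; [lia|exact Hw0]. }
  assert (H110 : forall w, length (true :: false :: w) <= length u ->
                 ycoset_eq (true :: true :: false :: w) [false]).
  { intros [|[] w'] Hw.
    - exact (ycoset_eq_trans _ _ _ ycoset_eq_110_111 ycoset_eq_111_0).
    - apply (ycoset_eq_x_move [true] (true :: true :: true :: false :: w')); [reflexivity|].
      apply (ycoset_eq_xinv_move [] (true :: true :: false :: w')); [reflexivity|].
      apply Hshort; [simpl in *; lia|discriminate].
    - apply (ycoset_eq_x_move [true] (true :: true :: false :: w')); [reflexivity|].
      apply Hshort; [simpl in *; lia|discriminate]. }
  destruct u as [|[] [|[] w]]; try congruence.
  - apply (ycoset_eq_x_move [] [true; true; true]); [reflexivity|apply ycoset_eq_111_0].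
  - apply (ycoset_eq_xinv_move [] (true :: true :: w)); [reflexivity|].
    apply Hshort; [simpl; lia|discriminate].
  - apply H110; exact (le_n _).
  - apply ycoset_eq_sym, ycoset_eq_0_10.
  - apply (ycoset_eq_x_move [] (true :: true :: false :: w)); [reflexivity|].
    apply H110; simpl; lia.
  - apply (ycoset_eq_x_move [] (true :: false :: w)); [reflexivity|].
    apply Hshort; [simpl; lia|discriminate].
Qed.

Lemma ycoset_eq_cone1 u : u <> [] -> ycoset_eq (true :: u) [false].
Proof. intros; apply (ycoset_eq_cone1_bounded (length u)); auto. Qed.

(* The relation y_s = x_s y_s0 y_s10^-1 y_s11 expresses y_s y_0^-1 through
   elements already known to lie in S. *)
Lemma ycoset_eq_from_relation s :
  ycoset_eq (s ++ [false]) (s ++ [true; false]) -> ycoset_eq (s ++ [true; true]) [false] ->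
  ycoset_eq s [false].
Proof.
  intros H1 H2.
  apply (generated_ext _ (fun e => ydiff (s ++ [true; true]) [false]
                                    (ydiff (s ++ [false]) (s ++ [true; false]) (x_s s e)))).
  - apply generated_comp; [apply generated_comp|]; [apply Sgrp_x|exact H1|exact H2].
  - intros e. unfold ydiff, gmul. rewrite (y_relation s e). reflexivity.
Qed.

Lemma ycoset_eq_1_0 : ycoset_eq [true] [false].
Proof. apply (ycoset_eq_from_relation [true]); [apply ycoset_eq_10_110|apply ycoset_eq_111_0]. Qed.

Lemma ycoset_eq_0 s : ycoset_eq s [false].
Proof.
  destruct s as [|[] w].
  - apply (ycoset_eq_from_relation []); [apply ycoset_eq_0_10|apply ycoset_eq_cone1; discriminate].
  - destruct w as [|b w]; [apply ycoset_eq_1_0|apply ycoset_eq_cone1; discriminate].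
  - destruct w as [|b w]; [apply ycoset_eq_refl|].
    (* p_0 swaps the cones 0 and 1, reducing y_0bw ~ y_1 to y_1bw ~ y_0. *)
    apply (ycoset_eq_trans _ [true]).
    + apply (ycoset_eq_transport (p_map 0) (p_map 0) (true :: b :: w) [false]);
        try (intros; reflexivity);
        try (apply cantor_case; intros [] z; reflexivity).
      * apply Sgrp_p.
      * apply ycoset_eq_cone1; discriminate.
    + apply ycoset_eq_1_0.
Qed.

Lemma ycoset_eq_all a b : ycoset_eq a b.
Proof. apply (ycoset_eq_trans _ [false]); [|apply ycoset_eq_sym]; apply ycoset_eq_0. Qed.

Definition c10 : Cantor -> Cantor := y_s [true; false].
Definition c10inv : Cantor -> Cantor := yinv_s [true; false].
Definition conj_c (h : Cantor -> Cantor) : Cantor -> Cantor := fun e => c10inv (h (c10 e)).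
Definition conj_cinv (h : Cantor -> Cantor) : Cantor -> Cantor := fun e => c10 (h (c10inv e)).

Lemma commute_inv (f h hinv : Cantor -> Cantor) :
  (forall e, hinv (h e) = e) -> (forall e, h (hinv e) = e) ->
  (forall e, f (h e) = h (f e)) -> forall e, f (hinv e) = hinv (f e).
Proof.
  intros Hl Hr Hc e. rewrite <- (Hl (f (hinv e))), <- Hc, Hr. reflexivity.
Qed.

(* If some y_b commutes with g and with c, then conjugating g by c^(+-1) amounts
   to conjugating it by the elements y_b^-1 c, c^-1 y_b of S. *)
Lemma conj_c_commuting g b :
  Sgrp g -> (forall e, y_s b (g e) = g (y_s b e)) -> (forall e, y_s b (c10 e) = c10 (y_s b e)) ->
  Sgrp (conj_c g) /\ Sgrp (conj_cinv g).
Proof.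
  intros Sg Hg Hc.
  assert (Hcinv : forall e, y_s b (c10inv e) = c10inv (y_s b e))
    by (apply (commute_inv _ c10); [apply yinv_s_y_s|apply y_s_yinv_s|exact Hc]).
  split.
  - apply (generated_ext _ (fun e => ydiff b [true; false] (g (ydiff [true; false] b e)))).
    + apply generated_comp; [apply generated_comp|]; [apply ycoset_eq_all|exact Sg|apply ycoset_eq_all].
    + intros e. unfold ydiff, gmul, conj_c. rewrite Hg, y_s_yinv_s. reflexivity.
  - apply (generated_ext _ (fun e => ydiff [true; false] b (g (ydiff b [true; false] e)))).
    + apply generated_comp; [apply generated_comp|]; [apply ycoset_eq_all|exact Sg|apply ycoset_eq_all].
    + intros e. unfold ydiff, gmul, conj_cinv.
      fold c10 c10inv. rewrite <- Hcinv, <- Hg, <- Hc, yinv_s_y_s. reflexivity.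
Qed.

(* If g intertwines the action on a cone a, disjoint from 10, with the action on
   the cone 10, then the conjugates of g by c are (y_10 y_a^-1) g and (y_a y_10^-1) g. *)
Lemma conj_c_intertwining g a :
  Sgrp g -> (forall F e, at_word [true; false] F (g e) = g (at_word a F e)) ->
  (forall e, y_s a (c10inv e) = c10inv (y_s a e)) ->
  Sgrp (conj_c g) /\ Sgrp (conj_cinv g).
Proof.
  intros Sg Hg Hc. split.
  - apply (generated_ext _ (fun e => g (ydiff [true; false] a e))).
    + apply generated_comp; [apply ycoset_eq_all|exact Sg].
    + intros e. unfold ydiff, gmul, conj_c, c10inv, yinv_s. rewrite Hg. reflexivity.
  - apply (generated_ext _ (fun e => g (ydiff a [true; false] e))).
    + apply generated_comp; [apply ycoset_eq_all|exact Sg].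
    + intros e. unfold ydiff, gmul, conj_cinv. rewrite <- Hc.
      unfold c10, y_s at 1 2. rewrite Hg. reflexivity.
Qed.

(* p_(m+1) maps the cone 0 onto the cone 10 (0eta -> 10eta) and so intertwines
   the actions on these cones; checked letter by letter. *)
Lemma p_succ_intertwines m F e :
  at_word [true; false] F (p_map (S m) e) = p_map (S m) (at_word [false] F e).
Proof.
  revert e; apply cantor_case; intros [] z.
  - rewrite (at_word_cons_neq false true) by discriminate.
    unfold p_map.
    repeat match goal with |- context [if ?b then _ else _] => destruct b end;
    cbn [prepend repeat];
    first [apply at_word_cons_neq; discriminate
          | rewrite at_word_cons, (at_word_cons_neq false true) by discriminate; reflexivity].
  - change (p_map (S m) (ccons false z)) with (ccons true (ccons false z)).
    rewrite !at_word_cons. reflexivity.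
Qed.

Lemma p0_involution e : p_map 0 (p_map 0 e) = e.
Proof. revert e; apply cantor_case; intros [] z; reflexivity. Qed.

Ltac disjoint_comm :=
  intros; unfold y_s, x_s, c10, c10inv, yinv_s;
  first [ exact (at_word_disjoint_comm [] _ _ _ _ _)
        | exact (eq_sym (at_word_disjoint_comm [] _ _ _ _ _))
        | exact (at_word_disjoint_comm [true] _ _ _ _ _)
        | exact (eq_sym (at_word_disjoint_comm [true] _ _ _ _ _)) ].

Lemma conj_c_generator g : S_gens g -> Sgrp (conj_c g) /\ Sgrp (conj_cinv g).
Proof.
  intros [[[[|[] u] ->]|[[|m] ->]]| ->].
  - apply (conj_c_intertwining _ [false; true]); [apply Sgrp_x| |disjoint_comm].
    apply (at_word_conj _ (xinv_s [])); [apply xinv_s_x_s|reflexivity].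
  - apply (conj_c_commuting _ [false]); [apply Sgrp_x|disjoint_comm..].
  - apply (conj_c_commuting _ [true; true]); [apply Sgrp_x|disjoint_comm..].
  - apply (conj_c_intertwining _ [false; false]); [apply Sgrp_p| |disjoint_comm].
    apply (at_word_conj _ (p_map 0)); [apply p0_involution|reflexivity].
  - apply (conj_c_intertwining _ [false]); [apply Sgrp_p|apply p_succ_intertwines|disjoint_comm].
  - apply (conj_c_commuting _ [false]); [apply ycoset_eq_10_110| |disjoint_comm].
    intros e. unfold gmul.
    transitivity (yinv_s [true; true; false] (y_s [false] (y_s [true; false] e))); [|f_equal];
      disjoint_comm.
Qed.

Lemma S_normalized_by_c h : Sgrp h -> Sgrp (conj_c h) /\ Sgrp (conj_cinv h).
Proof.
  induction 1 as [f Hf| |f g _ [IHf1 IHf2] _ [IHg1 IHg2]|f g _ [IH1 IH2] Hgf Hfg].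
  - apply conj_c_generator; exact Hf.
  - split; (apply (generated_ext _ (fun e => e)); [apply gen_id|]); intros e;
      unfold conj_c, conj_cinv, c10, c10inv; symmetry; [apply yinv_s_y_s|apply y_s_yinv_s].
  - split.
    + apply (generated_ext _ (gmul (conj_c f) (conj_c g))); [apply gen_mul; assumption|].
      intros e; unfold conj_c, gmul, c10, c10inv. rewrite y_s_yinv_s. reflexivity.
    + apply (generated_ext _ (gmul (conj_cinv f) (conj_cinv g))); [apply gen_mul; assumption|].
      intros e; unfold conj_cinv, gmul, c10, c10inv. rewrite yinv_s_y_s. reflexivity.
  - split.
    + apply (gen_inv _ (conj_c f)); [assumption| |]; intros e; unfold conj_c, c10, c10inv.
      * rewrite y_s_yinv_s, Hgf. apply yinv_s_y_s.
      * rewrite y_s_yinv_s, Hfg. apply yinv_s_y_s.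
    + apply (gen_inv _ (conj_cinv f)); [assumption| |]; intros e; unfold conj_cinv, c10, c10inv.
      * rewrite yinv_s_y_s, Hgf. apply y_s_yinv_s.
      * rewrite yinv_s_y_s, Hfg. apply y_s_yinv_s.
Qed.

Definition cpow (k : Z) (e : Cantor) : Cantor :=
  if (0 <=? k)%Z then Nat.iter (Z.to_nat k) c10 e else Nat.iter (Z.to_nat (- k)) c10inv e.

Lemma cpow_succ k e : cpow (Z.succ k) e = c10 (cpow k e).
Proof.
  unfold cpow. destruct (Z.leb_spec 0 k).
  - replace (0 <=? Z.succ k)%Z with true by (symmetry; apply Z.leb_le; lia).
    rewrite Z2Nat.inj_succ by lia. reflexivity.
  - destruct (Z.leb_spec 0 (Z.succ k)).
    + assert (k = -1)%Z by lia. subst. simpl. symmetry; apply y_s_yinv_s.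
    + replace (Z.to_nat (- k)) with (S (Z.to_nat (- Z.succ k))) by lia.
      simpl. symmetry; apply y_s_yinv_s.
Qed.

Lemma cpow_pred k e : cpow (Z.pred k) e = c10inv (cpow k e).
Proof.
  unfold cpow. destruct (Z.leb_spec 0 (Z.pred k)).
  - replace (0 <=? k)%Z with true by (symmetry; apply Z.leb_le; lia).
    replace (Z.to_nat k) with (S (Z.to_nat (Z.pred k))) by lia.
    simpl. symmetry; apply yinv_s_y_s.
  - destruct (Z.leb_spec 0 k).
    + assert (k = 0)%Z by lia. subst. reflexivity.
    + replace (Z.to_nat (- Z.pred k)) with (S (Z.to_nat (- k))) by lia. reflexivity.
Qed.

Lemma cpow_add a : forall b e, cpow a (cpow b e) = cpow (a + b) e.
Proof.
  induction a using Z.peano_ind; intros b e.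
  - reflexivity.
  - rewrite cpow_succ, IHa, Z.add_succ_l, cpow_succ. reflexivity.
  - rewrite cpow_pred, IHa, Z.add_pred_l, cpow_pred. reflexivity.
Qed.

Lemma cpow_opp_cancel k e : cpow (- k) (cpow k e) = e.
Proof. rewrite cpow_add. replace (- k + k)%Z with 0%Z by lia. reflexivity. Qed.

Lemma S_normalized_by_cpow k : forall h, Sgrp h -> Sgrp (fun e => cpow (- k) (h (cpow k e))).
Proof.
  induction k using Z.peano_ind; intros h Hh.
  - exact Hh.
  - apply (generated_ext _ _ _ (IHk _ (proj1 (S_normalized_by_c h Hh)))).
    intros e. unfold conj_c. change (c10 (cpow k e)) with (cpow 1 (cpow k e)).
    change (c10inv (h (cpow 1 (cpow k e)))) with (cpow (-1) (h (cpow 1 (cpow k e)))).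
    rewrite !cpow_add. f_equal; [lia|]. f_equal. f_equal. lia.
  - apply (generated_ext _ _ _ (IHk _ (proj2 (S_normalized_by_c h Hh)))).
    intros e. unfold conj_cinv. change (c10inv (cpow k e)) with (cpow (-1) (cpow k e)).
    change (c10 (h (cpow (-1) (cpow k e)))) with (cpow 1 (h (cpow (-1) (cpow k e)))).
    rewrite !cpow_add. f_equal; [lia|]. f_equal. f_equal. lia.
Qed.

(* f lies in the product set S <c>: f = h c^k (apply h, then c^k) with h in S. *)
Definition in_S_cpow (f : Cantor -> Cantor) : Prop :=
  exists h k, Sgrp h /\ forall e, f e = cpow k (h e).

(* S <c> contains S and is closed under products and inverses, by normality. *)
Lemma in_S_cpow_S h : Sgrp h -> in_S_cpow h.
Proof. intros Sh. exists h, 0%Z. split; [exact Sh|reflexivity]. Qed.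

Lemma in_S_cpow_mul f g : in_S_cpow f -> in_S_cpow g -> in_S_cpow (gmul f g).
Proof.
  intros [h1 [k1 [S1 E1]]] [h2 [k2 [S2 E2]]].
  exists (fun e => cpow (- k1) (h2 (cpow k1 (h1 e)))), (k1 + k2)%Z. split.
  - apply (generated_comp _ h1 (fun e => cpow (- k1) (h2 (cpow k1 e)))); [exact S1|].
    apply S_normalized_by_cpow; exact S2.
  - intros e. unfold gmul. rewrite E1, E2, cpow_add. f_equal. lia.
Qed.

Lemma in_S_cpow_inv f g :
  in_S_cpow f -> (forall e, g (f e) = e) -> (forall e, f (g e) = e) -> in_S_cpow g.
Proof.
  intros [h [k [Sh E]]] Hgf Hfg.
  (* g = c^-k (c^k g), where c^k g = h^-1 lies in S. *)
  assert (Sinv : Sgrp (fun e => g (cpow k e))).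
  { apply (gen_inv _ h); [exact Sh| |]; intros e.
    - rewrite <- E. apply Hgf.
    - rewrite <- (cpow_opp_cancel k (h _)), <- E, Hfg. apply cpow_opp_cancel. }
  exists (fun e => cpow (- - k) (g (cpow k (cpow (- k) e)))), (- k)%Z. split.
  - exact (S_normalized_by_cpow (- k) _ Sinv).
  - intros e. rewrite !cpow_add. replace (k + - k)%Z with 0%Z by lia.
    replace (- k + - - k)%Z with 0%Z by lia. reflexivity.
Qed.

(* Shat = S <c>: each generator y_s equals (y_s c^-1) c with y_s c^-1 in S. *)
Lemma Shat_decomposition f : Shat f -> in_S_cpow f.
Proof.
  induction 1 as [f Hf| |f g _ IHf _ IHg|f g _ IHf Hgf Hfg].
  - destruct Hf as [[s ->]|[[s ->]|[n ->]]].
    + apply in_S_cpow_S, Sgrp_x.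
    + exists (ydiff s [true; false]), 1%Z. split; [apply ycoset_eq_all|].
      intros e. unfold ydiff, gmul. symmetry; apply y_s_yinv_s.
    + apply in_S_cpow_S, Sgrp_p.
  - apply in_S_cpow_S, gen_id.
  - apply in_S_cpow_mul; assumption.
  - apply (in_S_cpow_inv f); assumption.
Qed.

Lemma Shat_y s : Shat (y_s s).
Proof. apply gen_base. right. left. exists s. reflexivity. Qed.

Lemma Shat_yinv s : Shat (yinv_s s).
Proof. apply (gen_inv _ (y_s s)); [apply Shat_y|apply yinv_s_y_s|apply y_s_yinv_s]. Qed.

Lemma S_in_Shat f : Sgrp f -> Shat f.
Proof.
  apply generated_mono. intros g [[[s ->]|[n ->]]| ->].
  - apply gen_base. left. exists s. reflexivity.
  - apply gen_base. right. right. exists n. reflexivity.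
  - apply gen_mul; [apply Shat_y|apply Shat_yinv].
Qed.

Lemma Shat_cpow k : Shat (cpow k).
Proof.
  induction k using Z.peano_ind.
  - apply gen_id.
  - apply (generated_ext _ (gmul (cpow k) c10)); [apply gen_mul; [exact IHk|apply Shat_y]|].
    intros e. symmetry. apply cpow_succ.
  - apply (generated_ext _ (gmul (cpow k) c10inv)); [apply gen_mul; [exact IHk|apply Shat_yinv]|].
    intros e. symmetry. apply cpow_pred.
Qed.

Section Kernel.
Local Open Scope Z_scope.
Variable psi : (Cantor -> Cantor) -> Z.
Hypothesis psi_hom : forall f g, Shat f -> Shat g -> psi (gmul f g) = psi f + psi g.

Lemma psi_id : psi (fun e => e) = 0.
Proof.
  pose proof (psi_hom (fun e => e) (fun e => e) (gen_id _) (gen_id _)) as H.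
  change (gmul (fun e : Cantor => e) (fun e => e)) with (fun e : Cantor => e) in H. lia.
Qed.

Lemma psi_inverse f g : Shat f -> (forall e, g (f e) = e) -> (forall e, f (g e) = e) ->
  psi g = - psi f.
Proof.
  intros Sf Hgf Hfg.
  pose proof (psi_hom f g Sf (gen_inv _ f g Sf Hgf Hfg)) as H.
  replace (gmul f g) with (fun e : Cantor => e) in H
    by (apply functional_extensionality; intros e; symmetry; apply Hgf).
  pose proof psi_id. lia.
Qed.

Hypothesis psi_y : forall s, psi (y_s s) = 1.

Lemma psi_yinv s : psi (yinv_s s) = -1.
Proof.
  rewrite (psi_inverse (y_s s)), psi_y; [reflexivity|apply Shat_y|apply yinv_s_y_s|apply y_s_yinv_s].
Qed.

Lemma psi_cpow k : psi (cpow k) = k.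
Proof.
  induction k using Z.peano_ind.
  - exact psi_id.
  - replace (cpow (Z.succ k)) with (gmul (cpow k) c10)
      by (apply functional_extensionality; intros e; symmetry; apply cpow_succ).
    rewrite psi_hom by (apply Shat_cpow || apply Shat_y). unfold c10. rewrite psi_y. lia.
  - replace (cpow (Z.pred k)) with (gmul (cpow k) c10inv)
      by (apply functional_extensionality; intros e; symmetry; apply cpow_pred).
    rewrite psi_hom by (apply Shat_cpow || apply Shat_yinv).
    unfold c10inv. rewrite psi_yinv. lia.
Qed.

Hypothesis psi_x : forall s, psi (x_s s) = 0.
Hypothesis psi_p : forall n, psi (p_map n) = 0.

Lemma psi_S f : Sgrp f -> psi f = 0.
Proof.
  induction 1 as [f Hf| |f g Sf IHf Sg IHg|f g Sf IHf Hgf Hfg].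
  - destruct Hf as [[[s ->]|[n ->]]| ->]; [apply psi_x|apply psi_p|].
    rewrite psi_hom by (apply Shat_y || apply Shat_yinv).
    rewrite psi_y, psi_yinv. reflexivity.
  - exact psi_id.
  - rewrite psi_hom by (apply S_in_Shat; assumption). lia.
  - rewrite (psi_inverse f g) by (try apply S_in_Shat; assumption). lia.
Qed.
End Kernel.

Open Scope Z_scope.

Theorem proposition6p9 (psi : (Cantor -> Cantor) -> Z)
  (psi_hom : forall f g, Shat f -> Shat g -> psi (gmul f g) = psi f + psi g)
  (psi_y : forall s, psi (y_s s) = 1)
  (psi_x : forall s, psi (x_s s) = 0)
  (psi_p : forall n, psi (p_map n) = 0) :
  forall f, Sgrp f <-> (Shat f /\ psi f = 0).
Proof.
  intros f; split.
  - intros Sf. split; [apply S_in_Shat, Sf|exact (psi_S psi psi_hom psi_y psi_x psi_p f Sf)].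
  - intros [Shf Pf].
    (* write f = h c^k with h in S; then 0 = psi f = psi h + k = k. *)
    destruct (Shat_decomposition f Shf) as [h [k [Sh Ef]]].
    assert (Hf : f = gmul h (cpow k)) by (apply functional_extensionality; exact Ef).
    rewrite Hf, psi_hom, (psi_S psi psi_hom psi_y psi_x psi_p h Sh), (psi_cpow psi psi_hom psi_y) in Pf
      by (apply S_in_Shat, Sh || apply Shat_cpow).
    assert (Hk : k = 0) by lia.
    rewrite Hf, Hk. exact Sh.
Qed.
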